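(* For every graph $G$ of order $n\geq 2$ with vertex connectivity $\kappa$, $\operatorname{th}_{\operatorname{H}}^*(G)\geq\left\lceil\frac{n+\kappa}{2}\right\rceil$. In particular, if $G$ is connected then $\operatorname{th}_{\operatorname{H}}^*(G)\geq\left\lceil\frac{n+1}{2}\right\rceil$.
   Context: All graphs are finite, simple and undirected; vertex connectivity follows the usual convention ($\kappa(K_n)=n-1$, $\kappa=0$ for disconnected graphs). Hopping color change rule: a blue vertex $v$ may force a white vertex $w$ to become blue if $v$ has not previously performed a force and every neighbor of $v$ is blue. For an initial blue set $B$, a chronological list of forces of $B$ is a sequence of such forces applied one at a time until no further force is possible; its underlying unordered set is a set of forces of $B$. $B$ is a hopping forcing set if some chronological list of forces of $B$ turns all vertices blue; $\operatorname{H}(G)$ is the minimum size of one. For a set of forces $\mathcal F$ of $B$, let $\mathcal F^{(0)}=B$ and for $t\geq1$ let $\mathcal F^{(t)}$ be the set of vertices $w\notin U_{t-1}:=\bigcup_{i=0}^{t-1}\mathcal F^{(i)}$ for which there is $(v\to w)\in\mathcal F$ with $v\in U_{t-1}$ and all neighbors of $v$ in $U_{t-1}$. $\operatorname{pt}_{\operatorname{H}}(G;\mathcal F)$ is the least $t$ with $\bigcup_{i=0}^t\mathcal F^{(i)}=V(G)$ ($\infty$ if none); $\operatorname{pt}_{\operatorname{H}}(G;B)$ is the minimum over sets of forces $\mathcal F$ of $B$ ($\infty$ if $B$ is not a hopping forcing set). $\operatorname{pt}_{\operatorname{H}}(G,k)=\min\{\operatorname{pt}_{\operatorname{H}}(G;B):|B|=k\}$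 and $\operatorname{th}_{\operatorname{H}}^*(G)=\min_{\operatorname{H}(G)\leq k<n}\{k\cdot\operatorname{pt}_{\operatorname{H}}(G,k)\}$, with the conventions $\min\emptyset=\infty$ and $k\cdot\infty=\infty$. *)

(* Graphs: symmetric irreflexive relation e on a finType T. *)
From Stdlib Require Import ClassicalEpsilon.
From mathcomp Require Import all_boot.
Set Implicit Arguments. Unset Strict Implicit. Unset Printing Implicit Defensive.

(* Extended naturals N ∪ {∞}: [None] stands for ∞. *)
Notation ninf := (option nat).

Definition obool (P : Prop) : bool :=
  if excluded_middle_informative P then true else false.

Lemma obool_ex (P : nat -> Prop) :
  (exists n, P n) -> exists n, obool (P n).
Proof.
move=> [n Hn]; exists n; rewrite /obool.
by case: excluded_middle_informative.
Qed.

(* Infimum of a set of naturals in N ∪ {∞}: least element, or ∞ if empty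
   (convention min ∅ = ∞). *)
Definition oinf (P : nat -> Prop) : ninf :=
  match excluded_middle_informative (exists n, P n) with
  | left h => Some (ex_minn (obool_ex h))
  | right _ => None
  end.

Definition nle (c : nat) (x : ninf) : Prop :=
  match x with None => True | Some m => c <= m end.

Section Graph.
Variables (T : finType) (e : rel T).

Definition induced (U : {set T}) : rel T :=
  [rel x y | [&& x \in U, y \in U & e x y]].

Definition connected_on (U : {set T}) : bool :=
  [forall x in U, forall y in U, connect (induced U) x y].

Definition cut_or_trivial (S : {set T}) : bool :=
  ~~ connected_on (~: S) || (#|~: S| <= 1).

(* kappa(G) = min |S| s.t. G - S is disconnected or trivial;
   gives kappa(K_n) = n-1 and kappa = 0 for disconnected graphs. *)
Definition vconn : nat :=
  \big[minn/#|T|]_(S : {set T} | cut_or_trivial S) #|S|.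

Definition nbrs_in (U : {set T}) (v : T) : bool :=
  [forall u, e v u ==> (u \in U)].

(* some force is possible with blue set [blue] and set [used] of vertices
   that have already forced *)
Definition can_force (blue used : {set T}) : bool :=
  [exists v, [&& v \in blue, v \notin used, nbrs_in blue v &
                 [exists w, w \notin blue]]].

(* a sequence of forces (v,w) (meaning v -> w), applied one at a time,
   each valid, and ending when no further force is possible *)
Fixpoint chron_ok (blue used : {set T}) (s : seq (T * T)) : bool :=
  match s with
  | [::] => ~~ can_force blue used
  | (v, w) :: s' =>
      [&& v \in blue, v \notin used, nbrs_in blue v, w \notin blue &
          chron_ok (w |: blue) (v |: used) s']
  end.

Definition chron_list (B : {set T}) (s : seq (T * T)) : bool :=
  chron_ok B set0 s.

Definition final_blue (B : {set T}) (s : seq (T * T)) : {set T} :=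
  B :|: [set p.2 | p in [set q in s]].

Definition hop_forcing (B : {set T}) : Prop :=
  exists s, chron_list B s /\ final_blue B s = setT.

(* H(G) (a hopping forcing set always exists, e.g. V(G), so the default
   value 0 of odflt is never used) *)
Definition hopN : nat :=
  odflt 0 (oinf (fun k => exists B : {set T}, #|B| = k /\ hop_forcing B)).

Definition force_set (B : {set T}) (F : {set T * T}) : Prop :=
  exists s, chron_list B s /\ F = [set p in s].

Definition hstep (F : {set T * T}) (U : {set T}) : {set T} :=
  U :|: [set w | (w \notin U) &&
           [exists v, [&& (v, w) \in F, v \in U & nbrs_in U v]]].

Definition Ut (B : {set T}) (F : {set T * T}) (t : nat) : {set T} :=
  iter t (hstep F) B.

Definition ptF (B : {set T}) (F : {set T * T}) : ninf :=
  oinf (fun t => Ut B F t = setT).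

Definition ptB (B : {set T}) : ninf :=
  oinf (fun t => hop_forcing B /\
                 exists F, force_set B F /\ ptF B F = Some t).

Definition ptk (k : nat) : ninf :=
  oinf (fun t => exists B : {set T}, #|B| = k /\ ptB B = Some t).

(* th*_H(G) = min_{H(G) <= k < n} k * pt_H(G,k), with k * ∞ = ∞ *)
Definition thstar : ninf :=
  oinf (fun x => exists k, hopN <= k < #|T| /\
                 exists t, ptk k = Some t /\ x = k * t).

End Graph.

(* Let U_i be the blue set after i rounds and S the set of forcers in U_i all
   of whose neighbours lie in U_i.  Every vertex of U_{i+1} outside B is the
   target of a force from S, and each vertex forces at most once, so
   |U_{i+1}| - |B| <= |S|.  While U_i <> V, removing U_i \ S separates S from
   the white vertices, so kappa <= |U_i| - |S|.  Hence
   |U_{i+1}| + kappa <= |U_i| + |B|, and over the t >= 1 rounds of a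
   propagation from |B| < n, n + t kappa <= (t + 1) |B| <= 2 t |B|. *)

From HB Require Import structures.
From Stdlib Require Import ClassicalEpsilon.
From mathcomp Require Import all_boot zify.
Set Implicit Arguments. Unset Strict Implicit.

(* Lets [bigD1] split the minimum defining [vconn]. *)
HB.instance Definition _ := SemiGroup.isComLaw.Build nat minn minnA minnC.

Lemma oinf_Some (P : nat -> Prop) m : oinf P = Some m -> P m.
Proof.
rewrite /oinf; case: excluded_middle_informative => // h [<-].
case: ex_minnP => n + _; rewrite /obool.
by case: excluded_middle_informative.
Qed.

Section HoppingForcing.
Variables (T : finType) (e : rel T).
Implicit Types (B U S : {set T}) (F : {set T * T}).

Lemma vconn_le_cut S : cut_or_trivial e S -> vconn e <= #|S|.
Proof. by move=> cutS; rewrite /vconn (bigD1 S) //= geq_minl. Qed.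

Lemma vconn_gt0 : 1 < #|T| -> connected_on e setT -> 0 < vconn e.
Proof.
move=> nT connT; rewrite /vconn; apply: (big_ind (fun x => 0 < x)).
- exact: ltnW.
- by move=> x y x_gt0 y_gt0; rewrite leq_min x_gt0 y_gt0.
- move=> S; rewrite card_gt0 /cut_or_trivial; apply: contraTN => /eqP ->.
  by rewrite setC0 connT cardsT -ltnNge.
Qed.

Lemma nbrs_in_subset U1 U2 v : U1 \subset U2 -> nbrs_in e U1 v -> nbrs_in e U2 v.
Proof.
move=> sU12 /forallP nbrs_v; apply/forallP => u; apply/implyP => evu.
exact: (subsetP sU12) (implyP (nbrs_v u) evu).
Qed.

(* A path in ~: (U :\: S) starting in S cannot leave S, since all
   neighbours of S-vertices lie in U. *)
Lemma cut_or_trivial_setD U S s x : S \subset U ->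
  {in S, forall v, nbrs_in e U v} -> s \in S -> x \notin U ->
  cut_or_trivial e (U :\: S).
Proof.
move=> sSU nbrsS Ss Ux; apply/orP; left; apply/negP => /forallP conn.
have s_out : s \in ~: (U :\: S) by rewrite !inE Ss.
have x_out : x \in ~: (U :\: S) by rewrite !inE (negbTE Ux) andbF.
have /connectP [p path_p x_last] :=
  implyP (forallP (implyP (conn s) s_out) x) x_out.
have : all (mem S) (s :: p).
  elim: p s Ss path_p {s_out x_last} => [|y p IHp] a Sa /=; first by rewrite Sa.
  case/andP => /and3P [_ y_out eay] path_p; rewrite Sa /=; apply: IHp => //.
  have Uy := implyP (forallP (nbrsS a Sa) y) eay.
  by move: y_out; rewrite !inE Uy andbT negbK.
move/allP/(_ x); rewrite x_last mem_last => /(_ isT) Sx.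
by move: Ux; rewrite x_last (subsetP sSU _ Sx).
Qed.

Lemma chron_ok_forcers_fresh blue used s : chron_ok e blue used s ->
  uniq (map fst s) && all (fun p => p.1 \notin used) s.
Proof.
elim: s blue used => [|[v w] s IHs] blue used //=.
case/and5P => _ used_v _ _ /IHs /andP [uniq_s fresh_s].
have notin_v : v \notin map fst s.
  by apply/negP => /mapP [p s_p pv]; have := allP fresh_s p s_p; rewrite -pv setU11.
have fresh_used : all (fun p => p.1 \notin used) s.
  by apply: sub_all fresh_s => p; rewrite !inE negb_or => /andP [].
by rewrite /= notin_v uniq_s used_v fresh_used.
Qed.

Lemma force_set_functional B F v w w' : force_set e B F ->
  (v, w) \in F -> (v, w') \in F -> w = w'.
Proof.
case=> s [/chron_ok_forcers_fresh /andP [+ _] ->]; rewrite !inE.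
elim: s => [|[a b] s IHs] //= /andP [s_a uniq_s]; rewrite !inE.
case/orP => [/eqP [eq_va eq_wb]|s_vw]; case/orP => [/eqP [eq_va' eq_wb']|s_vw'].
- by rewrite eq_wb eq_wb'.
- by case/mapP: s_a; exists (v, w'); rewrite // eq_va.
- by case/mapP: s_a; exists (v, w); rewrite // eq_va'.
- exact: IHs.
Qed.

Lemma subset_hstep F U : U \subset hstep e F U.
Proof. exact: subsetUl. Qed.

Lemma Ut_subset B F i j : i <= j -> Ut e B F i \subset Ut e B F j.
Proof.
move=> /subnK <-; rewrite /Ut iterD; elim: (j - i) => [|k IHk] /=.
  exact: subxx.
exact: subset_trans IHk (subset_hstep _ _).
Qed.

Lemma Ut_forcer B F i w : w \in Ut e B F i.+1 -> w \notin B ->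
  exists v, [&& (v, w) \in F, v \in Ut e B F i & nbrs_in e (Ut e B F i) v].
Proof.
elim: i w => [|i IHi] w; rewrite [Ut _ _ _ _.+1]/= /hstep inE.
  by case/orP=> [-> //|]; rewrite inE => /andP [_ /existsP].
case/orP => [/IHi + notBw|]; last by rewrite inE => /andP [_ /existsP].
case/(_ notBw) => v /and3P [Fvw Uv nbrs_v]; exists v.
by rewrite Fvw (subsetP (subset_hstep _ _)) ?(nbrs_in_subset (subset_hstep _ _)).
Qed.

Lemma Ut_succ_neq B F i t : Ut e B F t = setT -> Ut e B F i != setT ->
  Ut e B F i.+1 != Ut e B F i.
Proof.
move=> cover_t notcover_i; apply/eqP => fix_i.
have [le_ti|lt_it] := leqP t i.
  by move: notcover_i; rewrite -subTset -cover_t Ut_subset.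
have stable : Ut e B F (t - i + i) = Ut e B F i by rewrite /Ut iterD iter_fix.
by move: notcover_i; rewrite -stable subnK ?cover_t ?eqxx // ltnW.
Qed.

Lemma card_Ut_succ B F i : force_set e B F -> Ut e B F i != setT ->
  Ut e B F i.+1 != Ut e B F i ->
  #|Ut e B F i.+1| + vconn e <= #|Ut e B F i| + #|B|.
Proof.
move=> forceF notcover grow.
set U := Ut e B F i; set U1 := Ut e B F i.+1.
set P := [set p in F | (p.1 \in U) && nbrs_in e U p.1].
set S := fst @: P.
have sBU : B \subset U by exact: (Ut_subset B F (leq0n i)).
have sUU1 : U \subset U1 by exact: subset_hstep.
have new_targets : U1 :\: B \subset snd @: P.
  apply/subsetP => w; rewrite inE => /andP [notBw U1w].
  have [v /and3P [Fvw Uv nbrs_v]] := Ut_forcer U1w notBw.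
  by apply/imsetP; exists (v, w) => //; rewrite inE Fvw Uv nbrs_v.
have card_P : #|P| = #|S|.
  rewrite card_in_imset // => -[a b] [c d]; rewrite !inE /=.
  move=> /andP [Fab _] /andP [Fcd _] eq_ac; rewrite -eq_ac in Fcd.
  by rewrite -eq_ac (force_set_functional forceF Fab Fcd).
have card_new : #|U1| - #|B| <= #|S|.
  rewrite -card_P -(setIidPr (subset_trans sBU sUU1)) -cardsD.
  exact: leq_trans (subset_leq_card new_targets) (leq_imset_card _ _).
have sSU : S \subset U.
  by apply/subsetP => v /imsetP [p]; rewrite inE => /and3P [_ Up _] ->.
have nbrsS : {in S, forall v, nbrs_in e U v}.
  by move=> v /imsetP [p]; rewrite inE => /and3P [_ _ nbrs_p] ->.
have card_BU := subset_leq_card sBU; have card_UU1 := subset_leq_card sUU1.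
have [S0|[s Ss]] := set_0Vmem S.
  case/negP: grow; rewrite -/U -/U1 eq_sym eqEcard sUU1 andTb.
  by move: card_new; rewrite S0 cards0; lia.
have /subsetPn [x _ Ux] : ~~ (setT \subset U) by rewrite subTset.
have := vconn_le_cut (cut_or_trivial_setD sSU nbrsS Ss Ux).
rewrite cardsD (setIidPr sSU); have := subset_leq_card sSU; lia.
Qed.

Lemma card_Ut_le B F t j : force_set e B F -> Ut e B F t = setT ->
  (forall i, i < j -> Ut e B F i != setT) ->
  #|Ut e B F j| + j * vconn e <= j.+1 * #|B|.
Proof.
move=> forceF cover_t; elim: j => [|j IHj] notcover; first by rewrite /Ut /=; lia.
have notcover_j := notcover j (ltnSn j).
have := card_Ut_succ forceF notcover_j (Ut_succ_neq cover_t notcover_j).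
have := IHj (fun i lt_ij => notcover i (ltnW lt_ij)); lia.
Qed.

Lemma propagation_bound B F t : force_set e B F -> Ut e B F t = setT ->
  #|B| < #|T| -> #|T| + vconn e <= 2 * #|B| * t.
Proof.
move=> forceF cover_t small_B.
have cover_ex : exists t, Ut e B F t == setT by exists t; rewrite cover_t.
case: (ex_minnP cover_ex) => t0 /eqP cover_t0 min_t0.
have le_t0t : t0 <= t by apply: min_t0; rewrite cover_t.
have t0_gt0 : 0 < t0.
  case: t0 cover_t0 {min_t0 le_t0t} => // cover_B; change (B = setT) in cover_B.
  by rewrite cover_B cardsT ltnn in small_B.
have notcover : forall i, i < t0 -> Ut e B F i != setT.
  by move=> i; apply: contraTN => /min_t0; rewrite -leqNgt.
have := card_Ut_le forceF cover_t0 notcover.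
have : t0 * #|B| <= t * #|B| by rewrite leq_mul2r le_t0t orbT.
rewrite cover_t0 cardsT; nia.
Qed.

Lemma thstar_lower m : thstar e = Some m -> #|T| + vconn e <= 2 * m.
Proof.
move=> /oinf_Some [k [/andP [_ lt_kT] [t [ptk_t ->]]]].
have [B [card_B /oinf_Some [_ [F [forceF /oinf_Some cover_t]]]]] := oinf_Some ptk_t.
by rewrite mulnA -card_B; apply: propagation_bound forceF cover_t _; rewrite card_B.
Qed.

End HoppingForcing.

Theorem proposition4p8 (T : finType) (e : rel T)
  (esym : symmetric e) (eirr : irreflexive e) (hn : 2 <= #|T|) :
  nle ((#|T| + vconn e).+1 %/ 2) (thstar e) /\
  (connected_on e setT -> nle ((#|T| + 1).+1 %/ 2) (thstar e)).
Proof.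
rewrite /nle; case th_m: (thstar e) => [m|] //.
have := thstar_lower th_m; split; first lia.
by move=> connT; have := vconn_gt0 hn connT; lia.
Qed.
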